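(* For every $\varepsilon>0$ and every integer $s\ge1$ there exists a $d$-regular $K_{s+2}$-saturated graph on $n$ vertices with $d/n<\varepsilon$. Moreover, for every integer $s\ge 1$ there exists an infinite sequence of graphs $F_m$, where $F_m$ is $d_m$-regular, $K_{s+2}$-saturated and has $n_m$ vertices, such that $\frac{d_m}{n_m}=O_s\!\left(\frac{(\log\log n_m)^2}{\log n_m}\right)$.
   Context: All graphs are finite and simple. For a graph $F$, a graph $G$ is $F$-saturated if $G$ contains no copy of $F$, but adding any edge between two non-adjacent vertices of $G$ creates a copy of $F$. $K_r$ denotes the complete graph on $r$ vertices. $O_s$ means the implied constant may depend on $s$. *)

From mathcomp Require Import all_boot.
From Stdlib Require Import Reals.
Set Implicit Arguments. Unset Strict Implicit. Unset Printing Implicit Defensive.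

Definition simple_graph (V : finType) (e : rel V) : Prop :=
  (forall x y, e x y = e y x) /\ (forall x, ~~ e x x).

Definition regular (V : finType) (e : rel V) (d : nat) : Prop :=
  forall v : V, #|[set w | e v w]| = d.

Definition has_clique (V : finType) (e : rel V) (r : nat) : Prop :=
  exists S : {set V}, #|S| = r /\
    (forall x y, x \in S -> y \in S -> x != y -> e x y).

Definition add_edge (V : finType) (e : rel V) (x y : V) : rel V :=
  fun u v => e u v || ((u == x) && (v == y)) || ((u == y) && (v == x)).

Definition Kr_saturated (V : finType) (e : rel V) (r : nat) : Prop :=
  ~ has_clique e r /\
  (forall x y : V, x != y -> ~~ e x y -> has_clique (add_edge e x y) r).

(* Take as vertices the words of length k = C(s+2,2) e + 1 over an alphabet
   of s+1 letters, two words being adjacent when they agree in at most e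
   positions.  Among s+2 words every position has a repeated letter, so some
   pair agrees in more than k / C(s+2,2) > e positions: there is no K_{s+2}.
   Conversely, if x and y agree in more than e positions, one can write down
   s+2 words containing x and y in which every position is shared by exactly
   one pair, the pair {x,y} owning the positions where x and y agree and every
   other pair owning at most e positions; this is a K_{s+2} once xy is added.
   The graph is vertex transitive, and its degree is a lower binomial tail
   which is at most a 4/(e+1) fraction of the n = (s+1)^k vertices, while
   log n is of order e. *)
From mathcomp Require Import all_boot fingroup perm.
From Stdlib Require Import Reals Lra.
(* Re-imported so that [^] on [nat] is [expn] again, not Stdlib's [Nat.pow]. *)
From mathcomp Require Import ssrnat zify.
Set Implicit Arguments. Unset Strict Implicit. Unset Printing Implicit Defensive.

Lemma has_clique_inj (T T' : finType) (f : T' -> T) (r : rel T') (r' : rel T) p :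
  injective f -> (forall x y, x != y -> r x y -> r' (f x) (f y)) ->
  has_clique r p -> has_clique r' p.
Proof.
move=> f_inj f_hom [S [cardS cliqueS]]; exists (f @: S); split.
  by rewrite card_imset.
move=> _ _ /imsetP[x xS ->] /imsetP[y yS ->] fxy.
have xy : x != y by apply: contraNneq fxy => ->.
exact/f_hom/cliqueS.
Qed.

Lemma simple_graph_relpre (T T' : finType) (f : T' -> T) (r : rel T) :
  simple_graph r -> simple_graph (relpre f r).
Proof. by case=> symr irrr; split=> [x y|x] /=. Qed.

Section RelabelGraph.
Variables (T T' : finType) (f : T' -> T).
Hypothesis f_bij : bijective f.

Lemma regular_relpre (r : rel T) d : regular r d -> regular (relpre f r) d.
Proof.
move=> reg_r v; rewrite -(reg_r (f v)) -(on_card_preimset (f := f)); last exact: onW_bij.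
by apply: eq_card => w; rewrite !inE.
Qed.

Lemma Kr_saturated_relpre (r : rel T) p :
  Kr_saturated r p -> Kr_saturated (relpre f r) p.
Proof.
have [g fK gK] := f_bij; case=> no_clique saturated; split.
  by apply: contra_not no_clique; apply: has_clique_inj (bij_inj f_bij) _.
move=> x y xy rxy; have fxy : f x != f y by rewrite (bij_eq f_bij).
apply: has_clique_inj (saturated _ _ fxy rxy) => [|a b _]; first exact: can_inj gK.
by rewrite /add_edge /= !gK -(fK x) -(fK y) !(can_eq gK) !fK.
Qed.

End RelabelGraph.

Lemma vertex_transitive_regular (T : finType) (r : rel T) v0 :
  (forall u v, exists2 f : T -> T, bijective f &
     f u = v /\ forall x y, r (f x) (f y) = r x y) ->
  regular r #|[set w | r v0 w]|.
Proof.
move=> trans v; have [f f_bij [fv f_hom]] := trans v v0.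
rewrite -fv -[RHS](on_card_preimset (f := f)); last exact: onW_bij.
by apply: eq_card => w; rewrite !inE f_hom.
Qed.

Lemma perm_pair_exists (A : finType) (x0 x1 y0 y1 : A) :
  (x0 == x1) = (y0 == y1) -> exists s : {perm A}, s x0 = y0 /\ s x1 = y1.
Proof.
move=> eq01; pose t := tperm x0 y0; have tx0 : t x0 = y0 by rewrite tpermL.
exists (t * tperm (t x1) y1)%g; rewrite !permM tx0 tpermL; split=> //.
have [x01|x01] := eqVneq x0 x1.
  by move: eq01; rewrite -x01 eqxx tx0 => /esym/eqP <-; rewrite tpermL.
apply: tpermD; last by rewrite eq_sym -eq01.
by rewrite -tx0 (inj_eq perm_inj) eq_sym.
Qed.

Lemma set2_eqE (T : finType) (x y a b : T) : x != y ->
  ([set x; y] == [set a; b]) = ((x == a) && (y == b)) || ((x == b) && (y == a)).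
Proof.
move=> xy; apply/eqP/idP => [E|/orP[]/andP[/eqP-> /eqP->] //]; last by rewrite setUC.
have xab : x \in [set a; b] by rewrite -E set21.
have yab : y \in [set a; b] by rewrite -E set22.
by move: xy; case/set2P: xab => ->; case/set2P: yab => ->; rewrite ?eqxx ?orbT.
Qed.

(* Merge [b] into [a], embed the remaining [s.+1] points injectively into [A],
   and finally move the images of [r0] and [r1] to [u0] and [u1]. *)
Lemma collision_pattern_exists s (A : finType) (a b r0 r1 : 'I_s.+2) (u0 u1 : A) :
  s.+1 <= #|A| -> a != b -> r0 != r1 ->
  (u0 == u1) = ([set r0; r1] == [set a; b]) ->
  exists f : 'I_s.+2 -> A, [/\ f r0 = u0, f r1 = u1 &
    forall r r', r != r' -> (f r == f r') = ([set r; r'] == [set a; b])].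
Proof.
move=> sA ab r01 u01; pose merge r := if r == b then a else r.
have merge_neq r : merge r != b.
  by rewrite /merge; case: (eqVneq r b) => // _; rewrite eq_sym.
have mergeE r r' : r != r' -> (merge r == merge r') = ([set r; r'] == [set a; b]).
  move=> rr'; rewrite set2_eqE // /merge.
  by case: (eqVneq r b) rr' => [->|rb]; case: (eqVneq r' b) => [->|r'b] rr';
    rewrite ?eqxx ?andbT ?andbF ?orbF //= ?(negbTE rr').
pose c r := enum_val (widen_ord sA (odflt ord0 (unlift b (merge r)))).
have cE r r' : r != r' -> (c r == c r') = ([set r; r'] == [set a; b]).
  move=> rr'; rewrite -mergeE // (inj_eq enum_val_inj) -val_eqE /=.
  case: unliftP (merge_neq r) => [k ->|->]; last by rewrite eqxx.
  case: unliftP (merge_neq r') => [k' ->|->]; last by rewrite eqxx.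
  by rewrite (inj_eq lift_inj) val_eqE.
have c01 : (c r0 == c r1) = (u0 == u1) by rewrite cE // u01.
have [p [p0 p1]] := perm_pair_exists c01.
exists (fun r => p (c r)); split=> // r r' rr'.
by rewrite (inj_eq perm_inj) cE.
Qed.

Lemma card_le_fibers (X Y : finType) (g : X -> Y) (Q : {set Y}) e :
  (forall x, g x \in Q) -> (forall y, y \in Q -> #|[set x | g x == y]| <= e) ->
  #|X| <= #|Q| * e.
Proof.
move=> gQ fibQ; have -> : #|X| = \sum_(x : X) 1 by rewrite sum1_card.
rewrite (partition_big g (mem Q)) //= -sum_nat_const.
apply: leq_sum => y yQ; apply: leq_trans (fibQ y yQ).
by rewrite -sum1_card; apply/eq_leq/eq_bigl => x; rewrite !inE.
Qed.

(* [y0] only serves to define [g] when [Y] could be empty. *)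
Lemma fibers_le_exists (X Y : finType) (y0 : Y) (D : {set X}) (Q : {set Y}) e :
  #|D| <= #|Q| * e ->
  exists2 g : X -> Y, {in D, forall x, g x \in Q} &
    forall y, #|[set x in D | g x == y]| <= e.
Proof.
have [-> _|[x0 x0D] cardD] := set_0Vmem D.
  by exists (fun=> y0) => [x|y]; rewrite ?inE // setIdE set0I cards0.
pose W := setX Q [set: 'I_e].
have DW : #|D| <= #|W| by rewrite cardsX cardsT card_ord.
pose h x := enum_val (widen_ord DW (enum_rank_in x0D x)).
have h_inj : {in D &, injective h}.
  by move=> x y xD yD /enum_val_inj[] /val_inj/(enum_rank_in_inj xD yD).
exists (fun x => (h x).1) => [x _|y].
  by have := enum_valP (widen_ord DW (enum_rank_in x0D x)); rewrite inE => /andP[].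
rewrite -(card_in_imset (f := h)); last first.
  by move=> x x'; rewrite !inE => /andP[xD _] /andP[x'D _]; apply: h_inj.
apply: leq_trans (_ : #|setX [set y] [set: 'I_e]| <= _); last first.
  by rewrite cardsX cards1 cardsT card_ord mul1n.
apply/subset_leq_card/subsetP => _ /imsetP[x + ->]; rewrite !inE => /andP[_ /eqP <-].
by rewrite eqxx.
Qed.

Lemma card_pairs_but (T : finType) (P0 : {set T}) :
  #|P0| = 2 -> #|[set P : {set T} | (#|P| == 2) && (P != P0)]| = 'C(#|T|, 2) - 1.
Proof.
move=> P02; rewrite -card_draws [in RHS](cardsD1 P0) !inE P02 eqxx addKn.
by apply: eq_card => P; rewrite !inE andbC.
Qed.

Lemma card_leq_partition (X : finType) (f : X -> nat) m :
  #|[set x | f x <= m]| = \sum_(j < m.+1) #|[set x | f x == j]|.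
Proof.
rewrite -sum1_card (partition_big (fun x => inord (f x) : 'I_m.+1) predT) //=.
apply: eq_bigr => j _; rewrite -sum1_card; apply: eq_bigl => x; rewrite !inE.
apply/andP/eqP => [[fm /eqP <-]|fj]; first by rewrite inordK.
have fm : f x <= m by rewrite fj -ltnS.
by split=> //; apply/eqP/val_inj; rewrite /= inordK // fj.
Qed.

Lemma sum_le_double_last (f : nat -> nat) n :
  (forall j, j < n -> 2 * f j <= f j.+1) -> \sum_(j < n.+1) f j <= 2 * f n.
Proof.
rewrite -(big_mkord xpredT); elim: n => [|n IHn] f2; first by rewrite big_nat1 leq_pmull.
rewrite big_nat_recr //=; have := IHn (fun j jn => f2 j (ltnW jn)).
by have := f2 n (ltnSn n); lia.
Qed.

Lemma sum_ge_nondecreasing_run (f : nat -> nat) a m :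
  (forall j, a <= j < a + m -> f j <= f j.+1) ->
  m.+1 * f a <= \sum_(a <= j < a + m.+1) f j.
Proof.
move=> fup; have fa i : i <= m -> f a <= f (a + i).
  elim: i => [|i IHi] im; first by rewrite addn0.
  by apply: leq_trans (IHi (ltnW im)) _; rewrite addnS fup // leq_addr /= ltn_add2l.
rewrite -{1}(addKn a m.+1) -sum_nat_const_nat big_nat_cond [leqRHS]big_nat_cond.
apply: leq_sum => j /andP[/andP[aj ja] _]; rewrite -(subnKC aj) fa //.
by rewrite -ltnS -(ltn_add2l a) subnKC.
Qed.

Lemma bin2_double n : 'C(n.+1, 2) * 2 = n.+1 * n.
Proof. by rewrite -[2]/(2`!) bin_ffact !ffactnS ffactn0 muln1. Qed.

(* The terms [T j] at least double while [j < e] and keep growing on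
   [e <= j <= 3e/2], so the tail is at most [2 T e] while the whole binomial
   sum [s.+1 ^ k] is at least [(e./2).+1 * T e]. *)
Lemma binomial_lower_tail k s e : 0 < s -> 'C(s.+2, 2) * e < k ->
  (\sum_(j < e.+1) 'C(k, j) * s ^ (k - j)) * e.+1 <= 4 * s.+1 ^ k.
Proof.
move=> s0 ek; pose T j := 'C(k, j) * s ^ (k - j).
have C2 := bin2_double s.+1.
have T_succ j : j < k -> T j.+1 * (j.+1 * s) = (k - j) * T j.
  move=> jk; rewrite /T; have -> : s ^ (k - j) = s * s ^ (k - j.+1) by rewrite -expnS subnSK.
  by rewrite [RHS]mulnA -mul_bin_left [LHS]mulnACA; congr (_ * _); apply: mulnC.
have T_step j c : j < k -> c * (j.+1 * s) <= k - j -> c * T j <= T j.+1.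
  move=> jk cjk; have jpos : 0 < j.+1 * s by rewrite muln_gt0.
  by rewrite -(leq_pmul2r jpos) T_succ // mulnAC leq_mul2r cjk orbT.
have low : \sum_(j < e.+1) T j <= 2 * T e.
  by apply: sum_le_double_last => j je; apply: T_step; nia.
have high : (e./2).+1 * T e <= s.+1 ^ k.
  apply: leq_trans (sum_ge_nondecreasing_run (a := e) _) _ => [j /andP[ej je]|].
    by rewrite -[T j]mul1n; apply: T_step; nia.
  have ek' : e + (e./2).+1 <= k.+1 by nia.
  have -> : s.+1 ^ k = \sum_(0 <= j < k.+1) T j.
    by rewrite -[s.+1]addn1 expnDn big_mkord; apply: eq_bigr => j _; rewrite exp1n muln1.
  rewrite (big_cat_nat (leq0n e) (leq_trans (leq_addr _ e) ek')).
  by rewrite (big_cat_nat (leq_addr _ e) ek') /= addnCA leq_addr.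
have half : e.+1 <= 2 * (e./2).+1 by rewrite -(odd_double_half e) -addn1; case: odd; lia.
apply: leq_trans (leq_mul low half) _.
by rewrite mulnACA leq_mul2l mulnC high orbT.
Qed.

Section AgreementGraph.
Variables (I A : finType) (e : nat).
Implicit Types x y w : {ffun I -> A}.

Definition agree x y := #|[set i | x i == y i]|.

Definition agreement_graph : rel {ffun I -> A} := fun x y => agree x y <= e.

Lemma agreeC x y : agree x y = agree y x.
Proof. by apply: eq_card => i; rewrite !inE eq_sym. Qed.

Lemma agreexx x : agree x x = #|I|.
Proof. by rewrite -cardsT; apply: eq_card => i; rewrite !inE eqxx. Qed.

Lemma card_disagree x y : #|[set i | x i != y i]| = #|I| - agree x y.
Proof.
rewrite -(cardsC [set i | x i == y i]) addKn.
by apply: eq_card => i; rewrite !inE.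
Qed.

Lemma agreement_graph_simple : e < #|I| -> simple_graph agreement_graph.
Proof.
move=> eI; split=> [x y|x]; first by rewrite /agreement_graph agreeC.
by rewrite /agreement_graph agreexx -ltnNge.
Qed.

Lemma agreement_graph_regular x0 :
  regular agreement_graph #|[set w | agreement_graph x0 w]|.
Proof.
apply: vertex_transitive_regular => u v.
pose f w : {ffun I -> A} := [ffun i => tperm (u i) (v i) (w i)].
exists f; first by exists f => w; apply/ffunP => i; rewrite !ffunE tpermK.
split; first by apply/ffunP => i; rewrite ffunE tpermL.
by move=> x y; congr (_ <= e); apply: eq_card => i; rewrite !inE !ffunE (inj_eq perm_inj).
Qed.

Lemma agreement_graph_Kr_free r :
  #|A| < r -> 'C(r, 2) * e < #|I| -> ~ has_clique agreement_graph r.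
Proof.
move=> Ar eI [S [cardS cliqueS]].
pose Q := [set P : {set {ffun I -> A}} | P \subset S & #|P| == 2].
have collision i : exists P, (P \in Q) && [forall u in P, forall w in P, u i == w i].
  have /dinjectivePn[u uS [w /andP[wu wS] uw]] : ~~ dinjectiveb (fun w => w i) S.
    by apply: contraL Ar => /dinjectiveP/leq_card_in; rewrite cardS -leqNgt.
  exists [set u; w]; rewrite !inE cards2 (eq_sym u) wu andbT.
  apply/andP; split; first by apply/subsetP => z /set2P[]->.
  by apply/forall_inP => a /set2P[]->; apply/forall_inP => b /set2P[]->; rewrite ?uw.
have [P PQ] := fin_all_exists collision.
suff : #|I| <= #|Q| * e by rewrite cards_draws cardS leqNgt eI.
apply: card_le_fibers (fun i => proj1 (andP (PQ i))) _ => R.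
rewrite inE => /andP[RS /cards2P[u [w [uw defR]]]].
have [uS wS] : u \in S /\ w \in S.
  by split; apply: (subsetP RS); rewrite defR !inE eqxx ?orbT.
apply: leq_trans (cliqueS u w uS wS uw); apply/subset_leq_card/subsetP => i.
rewrite !inE => /eqP PiR; have /andP[_ /forall_inP/(_ u)] := PQ i.
rewrite PiR defR !inE eqxx => /(_ isT)/forall_inP/(_ w).
by rewrite !inE eqxx orbT => /(_ isT).
Qed.

Lemma agreement_pattern_exists s (r0 r1 : 'I_s.+2) x y (p : I -> {set 'I_s.+2}) :
  s.+1 <= #|A| -> r0 != r1 -> (forall i, #|p i| == 2) ->
  (forall i, (x i == y i) = ([set r0; r1] == p i)) ->
  exists v : 'I_s.+2 -> {ffun I -> A}, [/\ v r0 = x, v r1 = y &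
    forall r r', r != r' -> agree (v r) (v r') = #|[set i | p i == [set r; r']]|].
Proof.
move=> sA r01 p2 xyp.
have pattern i : exists f : 'I_s.+2 -> A, [/\ f r0 = x i, f r1 = y i &
    forall r r', r != r' -> (f r == f r') = ([set r; r'] == p i)].
  by move: (xyp i); have /cards2P[a [b [ab ->]]] := p2 i; apply: collision_pattern_exists.
have [F /all_and3[F0 F1 Fp]] := fin_all_exists pattern.
exists (fun r => [ffun i => F i r]); split; try by apply/ffunP => i; rewrite ffunE.
by move=> r r' rr'; apply: eq_card => i; rewrite !inE !ffunE Fp // eq_sym.
Qed.

Lemma agreement_pattern_clique s (r0 r1 : 'I_s.+2) x y (p : I -> {set 'I_s.+2}) :
  s.+1 <= #|A| -> r0 != r1 -> x != y -> e < #|I| -> (forall i, #|p i| == 2) ->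
  (forall i, (x i == y i) = ([set r0; r1] == p i)) ->
  (forall R, R != [set r0; r1] -> #|[set i | p i == R]| <= e) ->
  has_clique (add_edge agreement_graph x y) s.+2.
Proof.
move=> sA r01 xy eI p2 xyp pR.
have [v [v0 v1 agree_v]] := agreement_pattern_exists sA r01 p2 xyp.
have adj r r' : r != r' -> [set r; r'] != [set r0; r1] -> agreement_graph (v r) (v r').
  by move=> rr' RP; rewrite /agreement_graph agree_v // pR.
have v_inj : injective v.
  move=> r r' vrr'; apply/eqP/negPn/negP => rr'.
  have [/eqP|RP] := eqVneq [set r; r'] [set r0; r1].
    rewrite set2_eqE // => /orP[]/andP[/eqP rr0 /eqP r'r1];
    by move: vrr'; rewrite rr0 r'r1 v0 v1 => xy'; rewrite xy' eqxx in xy.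
  by move: (adj r r' rr' RP); rewrite /agreement_graph vrr' agreexx leqNgt eI.
exists (v @: setT); split; first by rewrite card_imset // cardsT card_ord.
move=> _ _ /imsetP[r _ ->] /imsetP[r' _ ->] vrr'.
have rr' : r != r' by apply: contraNneq vrr' => ->.
rewrite /add_edge; have [/eqP|RP] := eqVneq [set r; r'] [set r0; r1]; last by rewrite adj.
by rewrite set2_eqE // => /orP[]/andP[/eqP-> /eqP->]; rewrite v0 v1 !eqxx ?orbT.
Qed.

Lemma agreement_graph_saturating s x y :
  s.+1 <= #|A| -> #|I| <= 'C(s.+2, 2) * e + 1 -> x != y -> ~~ agreement_graph x y ->
  has_clique (add_edge agreement_graph x y) s.+2.
Proof.
move=> sA Ie xy nxy; have exy : e < agree x y by rewrite ltnNge.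
pose r0 : 'I_s.+2 := ord0; pose r1 : 'I_s.+2 := ord_max.
have r01 : r0 != r1 by rewrite -val_eqE.
pose Q := [set P : {set 'I_s.+2} | (#|P| == 2) && (P != [set r0; r1])].
pose D := [set i | x i != y i].
have cardD : #|D| <= #|Q| * e.
  by rewrite card_disagree card_pairs_but ?card_ord ?cards2 ?r01 // mulnBl mul1n; lia.
have [g gQ gfib] := fibers_le_exists [set r0; r1] cardD.
have gQ' i : x i != y i -> #|g i| == 2 /\ g i != [set r0; r1].
  by move=> xyi; have := gQ i; rewrite !inE xyi => /(_ isT)/andP.
pose p i := if x i == y i then [set r0; r1] else g i.
apply: (@agreement_pattern_clique _ r0 r1 _ _ p) => //.
- by apply: leq_trans exy (max_card _).
- by move=> i; rewrite /p; case: (eqVneq (x i) (y i)) => [_|/gQ'[]//]; rewrite cards2 r01.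
- move=> i; rewrite /p; case: (eqVneq (x i) (y i)) => [_|/gQ'[_]]; first by rewrite eqxx.
  by rewrite eq_sym => /negbTE.
move=> R RP; apply: leq_trans (gfib R); apply/subset_leq_card/subsetP => i.
rewrite !inE /p; case: (eqVneq (x i) (y i)) => //= _ /eqP PR.
by move: RP; rewrite -PR eqxx.
Qed.

Lemma card_agree_set x0 (Z : {set I}) :
  #|[set w : {ffun I -> A} | [set i | x0 i == w i] == Z]| = #|A|.-1 ^ (#|I| - #|Z|).
Proof.
pose F i := if i \in Z then pred1 (x0 i) else predC1 (x0 i).
rewrite (@eq_card _ _ (finfun.family F)); last first.
  move=> w; rewrite inE; apply/eqP/familyP => [wZ i|Fw].
    by rewrite /F -wZ inE; case: eqVneq => [->|]; rewrite !inE ?eqxx // eq_sym.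
  apply/setP => i; move: (Fw i); rewrite /F inE.
  by case: (i \in Z); rewrite !inE eq_sym; [move=> -> | move/negbTE].
rewrite (card_family F) foldrE big_map big_enum /=.
rewrite (eq_bigr (fun i => if i \in ~: Z then #|A|.-1 else 1)); last first.
  by move=> i _; rewrite /F inE; case: (i \in Z); rewrite /= ?card1 ?cardC1.
by rewrite -big_mkcond prod_nat_const cardsCs setCK.
Qed.

Lemma card_agree_eq x0 j :
  #|[set w | agree x0 w == j]| = 'C(#|I|, j) * #|A|.-1 ^ (#|I| - j).
Proof.
rewrite -sum1_card (partition_big (fun w : {ffun I -> A} => [set i | x0 i == w i])
  [pred Z : {set I} | #|Z| == j]) => [|w]; last by rewrite inE.
rewrite (eq_bigr (fun _ => #|A|.-1 ^ (#|I| - j))) => [|Z /eqP Zj]; last first.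
  rewrite -Zj -(card_agree_set x0) -[RHS]sum1_card; apply: eq_bigl => w; rewrite !inE.
  case: (eqVneq [set i | x0 i == w i] Z) => [E|]; rewrite ?andbF ?andbT //.
  by rewrite /agree E eqxx.
by rewrite sum_nat_cond_const card_draws.
Qed.

Lemma agreement_graph_degree x0 : #|[set w | agreement_graph x0 w]| =
  \sum_(j < e.+1) 'C(#|I|, j) * #|A|.-1 ^ (#|I| - j).
Proof.
rewrite (card_leq_partition (agree x0)).
by apply: eq_bigr => j _; rewrite card_agree_eq.
Qed.

End AgreementGraph.

Section WordGraph.
Variables s e : nat.

Definition word_length := 'C(s.+2, 2) * e + 1.
Definition word := {ffun 'I_word_length -> 'I_s.+1}.
Definition word_graph : rel word := agreement_graph e.
Definition word_degree := #|[set w | word_graph [ffun=> ord0] w]|.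

Lemma card_word : #|word| = s.+1 ^ word_length.
Proof. by rewrite card_ffun !card_ord. Qed.

Lemma card_word_gt0 : 0 < #|word|.
Proof. by rewrite card_word expn_gt0. Qed.

Lemma word_graph_simple : simple_graph word_graph.
Proof.
apply: agreement_graph_simple.
by rewrite card_ord /word_length addn1 ltnS leq_pmull // bin_gt0.
Qed.

Lemma word_graph_regular : regular word_graph word_degree.
Proof. exact: agreement_graph_regular. Qed.

Lemma word_graph_saturated : Kr_saturated word_graph (s + 2).
Proof.
rewrite addn2; split.
  by apply: agreement_graph_Kr_free; rewrite card_ord // /word_length addn1.
by move=> x y; apply: agreement_graph_saturating; rewrite card_ord.
Qed.

Lemma word_degree_small : 0 < s -> word_degree * e.+1 <= 4 * #|word|.
Proof.
move=> s0; rewrite /word_degree agreement_graph_degree !card_ord card_word.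
by apply: binomial_lower_tail; rewrite // /word_length addn1.
Qed.

End WordGraph.

Lemma word_graph_relabel s e :
  let G := relpre (@enum_val _ (mem predT)) (@word_graph s e) in
  simple_graph G /\ regular G (word_degree s e) /\ Kr_saturated G (s + 2).
Proof.
move=> G; have f_bij := @enum_val_bij (word s e).
split; first exact/simple_graph_relpre/word_graph_simple.
split; first exact/(regular_relpre f_bij)/word_graph_regular.
exact/(Kr_saturated_relpre f_bij)/word_graph_saturated.
Qed.

Lemma INR_expn m k : INR (m ^ k) = (INR m ^ k)%R.
Proof. by elim: k => [|k IHk] //; rewrite expnS mult_INR IHk. Qed.

Lemma ln_le (x y : R) : (0 < x)%R -> (x <= y)%R -> (ln x <= ln y)%R.
Proof.
move=> x0 xy; apply: Rnot_lt_le => /exp_increasing.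
by rewrite !exp_ln //; lra.
Qed.

Lemma inv_le_sq_ln_div (L a : R) :
  (exp 1 <= L)%R -> (L <= a)%R -> (/ a <= ln L ^ 2 / L)%R.
Proof.
move=> eL La; have L0 : (0 < L)%R by have := exp_pos 1; lra.
have lnL : (1 <= ln L)%R by rewrite -(ln_exp 1); apply: ln_le => //; apply: exp_pos.
apply: Rle_trans (Rinv_le_contravar _ _ L0 La) _.
rewrite -[X in (X <= _)%R]Rmult_1_l; apply: Rmult_le_compat_r.
  exact/Rlt_le/Rinv_0_lt_compat.
nra.
Qed.

Lemma ratio_le_inv (d n e : nat) : 0 < n -> d * e.+1 <= 4 * n ->
  (INR d / INR n <= 4 / INR e.+1)%R.
Proof.
move=> n0 /leP/le_INR; rewrite !mult_INR (_ : INR 4 = 4%R); last by simpl; lra.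
have n0' : (0 < INR n)%R by apply/lt_0_INR/leP.
have e0 : (0 < INR e.+1)%R by apply: lt_0_INR; lia.
move=> h; apply: (Rmult_le_reg_r (INR n * INR e.+1)); first exact: Rmult_lt_0_compat.
have -> : (INR d / INR n * (INR n * INR e.+1) = INR d * INR e.+1)%R by field; lra.
by have -> : (4 / INR e.+1 * (INR n * INR e.+1) = 4 * INR n)%R by field; lra.
Qed.

Lemma Kr_saturated_regular_sparse (eps : R) s : (0 < eps)%R -> 0 < s ->
  exists (n d : nat) (G : rel 'I_n), s + 2 <= n /\ simple_graph G /\ regular G d /\
    Kr_saturated G (s + 2) /\ (INR d / INR n < eps)%R.
Proof.
move=> eps0 s0; have [e [eps_e /ltP e0]] := archimed_cor1 (eps / 4) ltac:(lra).
have [G_simple [G_reg G_sat]] := word_graph_relabel s e.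
exists #|word s e|, (word_degree s e), (relpre enum_val (@word_graph s e)).
split.
  rewrite card_word; apply: leq_trans (leq_pexp2l (ltn0Sn s) (_ : 2 <= word_length s e)).
    by rewrite addn2; nia.
  by rewrite /word_length addn1 ltnS muln_gt0 bin_gt0 e0.
do 3!split => //.
apply: Rle_lt_trans (ratio_le_inv (card_word_gt0 s e) (word_degree_small e s0)) _.
have e0' : (0 < INR e)%R by apply/lt_0_INR/ltP.
have : (/ INR e.+1 <= / INR e)%R by apply: Rinv_le_contravar => //; rewrite S_INR; lra.
rewrite /Rdiv; lra.
Qed.

(* With [e = m.+1], [ln n = k ln (s+1)] is at most [c (e+1)], which turns the
   bound [4 / (e+1)] into [4 c / ln n]. *)
Lemma Kr_saturated_regular_loglog s : 0 < s ->
  exists (nn dd : nat -> nat) (F : forall m, rel 'I_(nn m)),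
    (forall m, nn m < nn m.+1) /\
    (forall m, simple_graph (F m) /\ regular (F m) (dd m) /\ Kr_saturated (F m) (s + 2)) /\
    exists (C : R) (M : nat), forall m, M <= m ->
      (INR (dd m) / INR (nn m) <= C * (ln (ln (INR (nn m))) ^ 2 / ln (INR (nn m))))%R.
Proof.
move=> s0; exists (fun m => #|word s m.+1|), (fun m => word_degree s m.+1).
exists (fun m => relpre enum_val (@word_graph s m.+1)); split.
  move=> m; rewrite !card_word ltn_exp2l ?ltnS // ltn_add2r ltn_pmul2l //.
  by rewrite bin_gt0.
split=> [m|]; first exact: word_graph_relabel.
pose C := 'C(s.+2, 2); pose c := (INR C.+1 * ln (INR s.+1))%R.
exists (4 * c)%R, 1 => m m1; set e := m.+1; set L := ln (INR #|word s e|).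
have ratio := ratio_le_inv (card_word_gt0 s e) (word_degree_small e s0).
have s2 : (2 <= INR s.+1)%R by apply/(le_INR 2)/leP.
have ln_s : (/ 2 < ln (INR s.+1))%R by apply: Rlt_le_trans ln_lt_2 (ln_le _ s2); lra.
have L_eq : L = (INR (word_length s e) * ln (INR s.+1))%R.
  by rewrite /L card_word INR_expn ln_pow //; lra.
have C3 : 3 <= C by have := bin2_double s.+1; rewrite -/C; nia.
have k7 : (7 <= INR (word_length s e))%R.
  rewrite (_ : 7%R = INR 7); last by simpl; lra.
  by apply/le_INR/leP; rewrite /word_length; nia.
have kC : (INR (word_length s e) <= INR C.+1 * INR e.+1)%R.
  by rewrite -mult_INR; apply/le_INR/leP; rewrite /word_length; nia.
have eL : (exp 1 <= L)%R by have := exp_le_3; rewrite L_eq; nra.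
have La : (L <= c * INR e.+1)%R by rewrite L_eq /c; nra.
apply: Rle_trans ratio _; rewrite Rmult_assoc; apply: Rmult_le_compat_l; first lra.
have c0 : (0 < c)%R by apply: Rmult_lt_0_compat; [apply: lt_0_INR; lia | lra].
have e0 : (0 < INR e.+1)%R by apply: lt_0_INR; lia.
have -> : (/ INR e.+1 = c * / (c * INR e.+1))%R by field; lra.
by apply: Rmult_le_compat_l; [lra | apply: inv_le_sq_ln_div].
Qed.

Theorem theorem1p3 :
  (forall (eps : R) (s : nat), (0 < eps)%R -> (1 <= s)%N ->
     exists (n d : nat) (e : rel 'I_n),
       (s + 2 <= n)%N /\ simple_graph e /\ regular e d /\
       Kr_saturated e (s + 2) /\ (INR d / INR n < eps)%R)
  /\
  (forall s : nat, (1 <= s)%N ->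
     exists (nn dd : nat -> nat) (F : forall m, rel 'I_(nn m)),
       (forall m, (nn m < nn m.+1)%N) /\
       (forall m, simple_graph (F m) /\ regular (F m) (dd m) /\
                  Kr_saturated (F m) (s + 2)) /\
       exists (C : R) (M : nat), forall m, (M <= m)%N ->
         (INR (dd m) / INR (nn m) <=
            C * (ln (ln (INR (nn m))) ^ 2 / ln (INR (nn m))))%R).
Proof.
split=> [eps s|s]; [exact: Kr_saturated_regular_sparse | exact: Kr_saturated_regular_loglog].
Qed.
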